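(* Let $p$ be a prime. Let $H$ and $K$ be conjugacy $p$-separable groups, let $A\leqslant H$ and $B\leqslant K$ be central subgroups, and let $\varphi:A\to B$ be an isomorphism. Suppose the subgroups $A$ and $B$, as well as every subgroup of finite $p$-power index in $A$ and every subgroup of finite $p$-power index in $B$, are $p$-separable in $H$ and in $K$ respectively. Then for every normal subgroup $M\leqslant H$ of finite $p$-power index in $H$ and every normal subgroup $N\leqslant K$ of finite $p$-power index in $K$ there exist normal subgroups $R\leqslant H$ and $S\leqslant K$ of finite $p$-power index in $H$ and $K$ respectively such that $R\leqslant M$, $S\leqslant N$, and $(A\cap R)\varphi=B\cap S$.
   Context: A group $G$ is conjugacy $p$-separable if whenever $a,b\in G$ are not conjugate in $G$, there is a homomorphism $\psi$ of $G$ onto a finite $p$-group $X$ such that $a\psi$ and $b\psi$ are not conjugate in $X$. A subset $M$ of a group $Y$ is $p$-separable in $Y$ if for every $y\in Y\setminus M$ there is a homomorphism $\psi$ of $Y$ onto a finite $p$-group $X$ with $y\psi\notin M\psi$. Subgroups $R\leqslant H$, $S\leqslant K$ with $(A\cap R)\varphi=B\cap S$ are called $(A,B,\varphi)$-compatible. *)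

From HB Require Import structures.
From mathcomp Require Import all_boot all_fingroup all_solvable.
Set Implicit Arguments. Unset Strict Implicit. Unset Printing Implicit Defensive.

Local Open Scope group_scope.

(* Possibly infinite groups are MathComp [groupType]s (boot/monoid.v);
   subsets of such a group are Prop-valued predicates [G -> Prop]. *)

Section Defs.
Variable G : groupType.

Definition is_subgroup (A : G -> Prop) : Prop :=
  [/\ A 1, (forall x y, A x -> A y -> A (x * y)) & (forall x, A x -> A x^-1)].

Definition is_normal_subgroup (A : G -> Prop) : Prop :=
  is_subgroup A /\ forall x g, A x -> A (x ^ g).

Definition is_central_subgroup (A : G -> Prop) : Prop :=
  is_subgroup A /\ forall a g, A a -> a * g = g * a.

(* C has finite p-power index in A (for C <= A): there are p^k elements r_i
   of A such that every x in A lies in exactly one right coset C r_i. *)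
Definition has_pindex_in (p : nat) (A C : G -> Prop) : Prop :=
  exists k : nat, exists r : 'I_(p ^ k) -> G,
    (forall i, A (r i)) /\ (forall x, A x -> exists! i, C (x * (r i)^-1)).

Definition onto_finite_pgroup (p : nat) (gT : finGroupType) (psi : G -> gT) : Prop :=
  [/\ (forall x y, psi (x * y) = psi x * psi y),
      (forall z : gT, exists x, psi x = z)
    & p.-group [set: gT]].

Definition conjugate (a b : G) : Prop := exists g : G, a ^ g = b.

Definition conj_p_separable (p : nat) : Prop :=
  forall a b : G, ~ conjugate a b ->
    exists (gT : finGroupType) (psi : G -> gT),
      onto_finite_pgroup p psi /\ ~ (exists z : gT, psi a ^ z = psi b).

Definition p_separable_in (p : nat) (M : G -> Prop) : Prop :=
  forall y : G, ~ M y ->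
    exists (gT : finGroupType) (psi : G -> gT),
      onto_finite_pgroup p psi /\ ~ (exists m, M m /\ psi m = psi y).

End Defs.

Definition is_iso_on (G G' : groupType) (A : G -> Prop) (B : G' -> Prop)
    (phi : G -> G') : Prop :=
  [/\ (forall x y, A x -> A y -> phi (x * y) = phi x * phi y),
      (forall x, A x -> B (phi x)),
      (forall x y, A x -> A y -> phi x = phi y -> x = y)
    & (forall y, B y -> exists x, A x /\ phi x = y)].

From mathcomp Require Import all_boot all_fingroup all_solvable.
From mathcomp Require Import boolp.
Set Implicit Arguments. Unset Strict Implicit. Unset Printing Implicit Defensive.
Local Open Scope group_scope.

(* A normal subgroup of p-power index is the kernel of a homomorphism onto a
   finite p-group (the action on its cosets), and preimages of subgroups
   under such homomorphisms have p-power index.  Put C := A ∩ M ∩ φ⁻¹(N);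
   it has p-power index in A, and φ(C) has p-power index in B.  Since C is
   p-separable, one homomorphism F onto a finite p-group separates from C
   all of the finitely many coset representatives of C in A; F(C) is central
   in the image because A is central, so R := M ∩ F⁻¹(F(C)) is normal of
   p-power index, and A ∩ R = C.  The same construction for φ(C) in B gives
   S with B ∩ S = φ(C) = (A ∩ R)φ. *)

Lemma is_subgroupT (G : groupType) : is_subgroup (fun _ : G => True).
Proof. by []. Qed.

Section HomOn.
Variables (G G' : groupType) (D : G -> Prop) (f : G -> G').

Definition hom_on := forall x y, D x -> D y -> f (x * y) = f x * f y.

Hypotheses (sD : is_subgroup D) (fM : hom_on).

Lemma hom_on1 : f 1 = 1.
Proof. by case: sD => D1 _ _; apply: (@mulIg _ (f 1)); rewrite -fM // !mul1g. Qed.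

Lemma hom_onV x : D x -> f x^-1 = (f x)^-1.
Proof.
case: sD => _ _ DV Dx; apply/esym/mulg1_eq.
by rewrite -fM ?mulgV ?hom_on1 //; apply: DV.
Qed.

Lemma is_subgroup_image (C : G -> Prop) :
  is_subgroup C -> (forall x, C x -> D x) ->
  is_subgroup (fun y => exists x, C x /\ f x = y).
Proof.
case=> C1 CM CV CD; split; first by exists 1; rewrite hom_on1.
  move=> _ _ [x [Cx <-]] [y [Cy <-]].
  by exists (x * y); split; [apply: CM | apply: fM; apply: CD].
by move=> _ [x [Cx <-]]; exists x^-1; split; [apply: CV | apply: hom_onV; apply: CD].
Qed.

End HomOn.

Section FiniteImage.
Variables (G : groupType) (gT : finGroupType) (D : G -> Prop) (f : G -> gT).

Definition himg : {set gT} := [set z | `[< exists x, D x /\ f x = z >]].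

Lemma himgP z : reflect (exists x, D x /\ f x = z) (z \in himg).
Proof. by rewrite inE; apply: asboolP. Qed.

Lemma mem_himg x : D x -> f x \in himg.
Proof. by move=> Dx; apply/himgP; exists x. Qed.

Hypotheses (sD : is_subgroup D) (fM : hom_on D f).

Lemma group_set_himg : group_set himg.
Proof.
have [D1 DM _] := sD; apply/group_setP; split.
  by rewrite -(hom_on1 sD fM); apply: mem_himg.
move=> _ _ /himgP [x [Dx <-]] /himgP [y [Dy <-]].
by rewrite -fM //; apply/mem_himg/DM.
Qed.

Definition himg_group := Group group_set_himg.

Lemma pgroup_himg (p : nat) (P : {group gT}) :
  (forall x, D x -> f x \in P) -> p.-group P -> p.-group himg.
Proof.
move=> fP; apply: (pgroupS (H := himg_group)).
by apply/subsetP => _ /himgP [x [Dx <-]]; apply: fP.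
Qed.

Lemma has_pindex_preim (p : nat) (Q : {group gT}) (C : G -> Prop) :
  p.-group himg -> (forall x, D x -> C x <-> f x \in Q) -> has_pindex_in p D C.
Proof.
move=> pI CQ; have [_ DM DV] := sD.
set I := himg_group; set J := (I :&: Q)%G.
have /p_natP [k idx] : p.-nat #|rcosets J I|.
  by apply: pnat_dvd (dvdn_indexg I J) _; rewrite -pgroupE.
exists k; rewrite -idx.
have reprX (X : {set gT}) : X \in rcosets J I -> repr X \in I /\ J :* repr X = X.
  case/rcosetsP=> y yI ->; rewrite rcoset_repr; split => //.
  have /rcosetP [j /setIP [jI _] ->] := mem_repr_rcoset J y.
  exact: groupM.
have preX (X : {set gT}) : X \in rcosets J I -> {x | D x /\ f x = repr X}.
  by case/reprX => /himgP /cid.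
pose r i := sval (preX _ (enum_valP i)).
exists r; split => [i | x Dx]; first by case: (svalP (preX _ (enum_valP i))).
have coset_eq i : C (x * (r i)^-1) <-> enum_val i = J :* f x.
  case: (svalP (preX _ (enum_valP i))) => Dr fr.
  have [rI rX] := reprX _ (enum_valP i).
  rewrite CQ; last by apply: DM => //; apply: DV.
  rewrite fM //; last by apply: DV.
  rewrite (hom_onV sD fM Dr) fr; split.
    move=> hQ; rewrite -rX; apply/esym/rcoset_eqP; rewrite mem_rcoset.
    by apply/setIP; split; rewrite // groupM ?groupV ?mem_himg.
  move=> eX; have : f x \in J :* repr (enum_val i) by rewrite rX eX rcoset_refl.
  by rewrite mem_rcoset => /setIP [].
have JfxI : J :* f x \in rcosets J I by apply/rcosetsP; exists (f x); rewrite ?mem_himg.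
exists (enum_rank_in JfxI (J :* f x)); split; first by apply/coset_eq; rewrite enum_rankK_in.
by move=> j /coset_eq eX; apply: enum_val_inj; rewrite eX enum_rankK_in.
Qed.

End FiniteImage.

Section Pairing.
Variables (G : groupType) (gT1 gT2 : finGroupType) (D : G -> Prop).
Variables (f1 : G -> gT1) (f2 : G -> gT2).
Hypotheses (sD : is_subgroup D) (f1M : hom_on D f1) (f2M : hom_on D f2).

Lemma hom_on_pair : hom_on D (fun x => (f1 x, f2 x)).
Proof. by move=> x y Dx Dy; rewrite f1M // f2M. Qed.

Lemma pgroup_himg_pair (p : nat) :
  p.-group (himg D f1) -> p.-group (himg D f2) ->
  p.-group (himg D (fun x => (f1 x, f2 x))).
Proof.
move=> p1 p2.
apply: (pgroup_himg sD hom_on_pair (P := setX_group (himg_group sD f1M) (himg_group sD f2M))).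
  by move=> x Dx; apply/setXP; rewrite !mem_himg.
by rewrite pgroupE cardsX pnatM -!pgroupE p1 p2.
Qed.

End Pairing.

Section CosetAction.
Variables (G : groupType) (M : G -> Prop) (n : nat) (r : 'I_n -> G).
Hypotheses (nM : is_normal_subgroup M) (rM : forall x, exists! i, M (x * (r i)^-1)).

Lemma coset_index_subproof x : exists i, M (x * (r i)^-1).
Proof. by have [i [Mi _]] := rM x; exists i. Qed.

Definition coset_index x : 'I_n := sval (cid (coset_index_subproof x)).

Lemma coset_indexP x : M (x * (r (coset_index x))^-1).
Proof. exact: svalP (cid (coset_index_subproof x)). Qed.

Lemma coset_index_unique x i : M (x * (r i)^-1) -> i = coset_index x.
Proof. by have [i0 [_ u]] := rM x => /u <-; apply: u; apply: coset_indexP. Qed.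

Lemma coset_index_rep i : coset_index (r i) = i.
Proof. by apply/esym/coset_index_unique; rewrite mulgV; case: nM => [[]]. Qed.

Lemma coset_index_mulr x y :
  coset_index (r (coset_index x) * y) = coset_index (x * y).
Proof.
have [[_ MM MV] _] := nM; apply/esym/coset_index_unique.
have -> : r (coset_index x) * y * (r (coset_index (x * y)))^-1
        = (x * (r (coset_index x))^-1)^-1 * (x * y * (r (coset_index (x * y)))^-1).
  by rewrite invMg invgK !mulgA mulgKV.
by apply: MM; [apply: MV; apply: coset_indexP | apply: coset_indexP].
Qed.

Lemma rep_coset_index1 : M (r (coset_index 1)).
Proof.
have [[_ _ MV] _] := nM.
by have := MV _ (coset_indexP 1); rewrite mul1g invgK.
Qed.

Lemma coset_act_inj x : injective (fun i => coset_index (r i * x)).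
Proof.
have back i : coset_index (r (coset_index (r i * x)) * x^-1) = i.
  by rewrite coset_index_mulr mulgK coset_index_rep.
by move=> i j /= eij; rewrite -(back i) -(back j) eij.
Qed.

Definition coset_act x : {perm 'I_n} := perm (@coset_act_inj x).

Lemma coset_actE x i : coset_act x i = coset_index (r i * x).
Proof. exact: permE. Qed.

Lemma hom_coset_act : hom_on (fun _ => True) coset_act.
Proof.
by move=> x y _ _; apply/permP => i; rewrite permM !coset_actE coset_index_mulr mulgA.
Qed.

Lemma coset_act_fix x : coset_act x (coset_index 1) = coset_index 1 -> M x.
Proof.
have [[_ MM MV] _] := nM; have Mr1 := rep_coset_index1.
rewrite coset_actE => ex; have := coset_indexP (r (coset_index 1) * x); rewrite ex => Mrx.
have := MM _ _ (MM _ _ (MV _ Mr1) Mrx) Mr1.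
by rewrite !mulgA mulVg mul1g mulgKV.
Qed.

Lemma coset_act_eq1 x : coset_act x = 1 <-> M x.
Proof.
split => [ex | Mx]; first by apply: coset_act_fix; rewrite ex perm1.
apply/permP => i; rewrite coset_actE perm1; apply/esym/coset_index_unique.
by have := nM.2 _ (r i)^-1 Mx; rewrite conjgE invgK mulgA.
Qed.

Lemma coset_act_eq_at1 x y :
  coset_act x (coset_index 1) = coset_act y (coset_index 1) -> coset_act x = coset_act y.
Proof.
have hV := hom_onV (@is_subgroupT G) hom_coset_act; move=> exy.
have /coset_act_eq1 : M (x * y^-1).
  apply: coset_act_fix.
  rewrite hom_coset_act // permM exy -permM -hom_coset_act // mulgV.
  by rewrite (hom_on1 (@is_subgroupT G) hom_coset_act) perm1.
by move/(congr1 (fun g => g * coset_act y)); rewrite hom_coset_act // hV // mulgKV mul1g.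
Qed.

Lemma card_himg_coset_act : #|himg (fun _ => True) coset_act| = n.
Proof.
have act1 j : coset_act (r j) (coset_index 1) = j.
  by rewrite coset_actE; apply/esym/coset_index_unique; rewrite mulgK; apply: rep_coset_index1.
have -> : himg (fun _ => True) coset_act = [set coset_act (r j) | j : 'I_n].
  apply/setP => z; apply/himgP/imsetP => [[x [_ <-]] | [j _ ->]]; last by exists (r j).
  by exists (coset_act x (coset_index 1)) => //; apply: coset_act_eq_at1; rewrite act1.
by rewrite card_imset ?card_ord // => i j eij; rewrite -(act1 i) -(act1 j) eij.
Qed.

End CosetAction.

Lemma normal_pindex_kernel (G : groupType) (p : nat) (M : G -> Prop) :
  prime p -> is_normal_subgroup M -> has_pindex_in p (fun _ => True) M ->
  exists (gT : finGroupType) (th : G -> gT),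
    [/\ hom_on (fun _ => True) th, p.-group (himg (fun _ => True) th)
      & forall x, th x = 1 <-> M x].
Proof.
move=> pp nM [k [r [_ rM]]].
have {}rM x : exists! i, M (x * (r i)^-1) := rM x I.
exists _, (coset_act nM rM); split.
- exact: hom_coset_act.
- by rewrite pgroupE card_himg_coset_act pnatX pnat_id.
- exact: coset_act_eq1.
Qed.

Lemma p_separable_in_seq (G : groupType) (p : nat) (C : G -> Prop)
    (T : eqType) (y : T -> G) (s : seq T) :
  p_separable_in p C ->
  exists (gT : finGroupType) (F : G -> gT),
    [/\ hom_on (fun _ => True) F, p.-group (himg (fun _ => True) F)
      & forall i, i \in s -> ~ C (y i) -> F (y i) \notin himg C F].
Proof.
move=> sepC; elim: s => [|i s [gT [F [FM pF sepF]]]].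
  exists _, (fun _ => 1 : {perm unit}); split => //; first by move=> *; rewrite mulg1.
  have -> : himg (fun _ : G => True) (fun _ => 1 : {perm unit}) = [1 {perm unit}].
    by apply/setP => z; apply/himgP/set1P => [[_ [_ <-]] | ->] //; exists 1.
  exact: pgroup1.
have [Cyi | nCyi] := pselect (C (y i)).
  by exists gT, F; split => // j; rewrite inE => /predU1P [-> // | /sepF].
have [gT' [psi [[psiM _ pgT'] nsep]]] := sepC _ nCyi.
have psiM' : hom_on (fun _ => True) psi by move=> ? ? _ _; apply: psiM.
exists _, (fun x => (F x, psi x)); split; first exact: hom_on_pair.
  apply: (pgroup_himg_pair (@is_subgroupT G)) => //.
  by apply: (pgroup_himg (@is_subgroupT G) psiM' (P := [set: gT']%G)) => // x; rewrite inE.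
move=> j /predU1P [-> _ | js nCyj]; apply/negP => /himgP [c [Cc [eF epsi]]].
  by apply: nsep; exists c.
by have /negP := sepF j js nCyj; apply; apply/himgP; exists c.
Qed.

Lemma normal_pindex_trace (G : groupType) (p : nat) (A C M : G -> Prop) :
  prime p -> is_central_subgroup A ->
  is_normal_subgroup M -> has_pindex_in p (fun _ => True) M ->
  is_subgroup C -> (forall x, C x -> A x) -> (forall x, C x -> M x) ->
  has_pindex_in p A C -> p_separable_in p C ->
  exists R : G -> Prop,
    [/\ is_normal_subgroup R /\ has_pindex_in p (fun _ => True) R,
        forall x, R x -> M x & forall x, A x /\ R x <-> C x].
Proof.
move=> pp [sA cA] nM iM sC CA CM [k [r [rA rC]]] sepC.
have [gT [th [thM pth thM1]]] := normal_pindex_kernel pp nM iM.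
have [gF [F [FM pF sepF]]] := p_separable_in_seq r (enum 'I_(p ^ k)) sepC.
have sT := @is_subgroupT G; have [_ CMul _] := sC.
have FCM : hom_on C F by move=> x y _ _; apply: FM.
have FV x : F x^-1 = (F x)^-1 := hom_onV sT FM I.
pose FC := himg_group sC FCM.
pose R x := th x = 1 /\ F x \in FC.
have RC x : A x -> R x -> C x.
  move=> Ax [_ Fx]; have [i [Cxr _]] := rC x Ax.
  have [Cr | nCr] := pselect (C (r i)).
    by rewrite -(mulgKV (r i) x); apply: CMul.
  have /negP := sepF i (mem_enum _ i) nCr; case; change (F (r i) \in FC).
  have -> : r i = (x * (r i)^-1)^-1 * x by rewrite invMg invgK mulgKV.
  by rewrite FM // FV groupM ?groupV //; apply: mem_himg.
exists R; split.
- split; first split; first split.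
    + by split; [apply: hom_on1 sT thM | rewrite (hom_on1 sT FM) group1].
    + move=> x y [thx Fx] [thy Fy].
      by split; [rewrite thM // thx thy mulg1 | rewrite FM // groupM].
    + move=> x [thx Fx].
      by split; [rewrite (hom_onV sT thM I) thx invg1 | rewrite FV groupV].
    + move=> x g [/thM1 Mx /himgP [c [Cc Fc]]]; split; first by apply/thM1; apply: nM.2.
      apply/himgP; exists c; split => //; apply/esym.
      by rewrite conjgE !FM // FV -Fc -FV -!FM // (cA _ _ (CA _ Cc)) mulKg.
  apply: (has_pindex_preim sT (hom_on_pair thM FM) (Q := setX_group 1%G FC)).
    exact: pgroup_himg_pair.
  move=> x _; rewrite /R; split => [[th1 FCx] | /setXP [/set1P th1 FCx]] //.
  by apply/setXP; split => //; apply/set1P.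
- by move=> x [/thM1].
- move=> x; split => [[Ax Rx] | Cx]; first exact: RC.
  by split; [apply: CA | split; [apply/thM1/CM | apply: mem_himg]].
Qed.

Section IsoCore.
Variables (H K : groupType) (A : H -> Prop) (B : K -> Prop) (phi : H -> K).
Hypotheses (sA : is_subgroup A) (iso : is_iso_on A B phi).

Lemma hom_on_iso : hom_on A phi.
Proof. by case: iso. Qed.

Lemma has_pindex_iso_image (p : nat) (C : H -> Prop) :
  (forall x, C x -> A x) -> has_pindex_in p A C ->
  has_pindex_in p B (fun y => exists x, C x /\ phi x = y).
Proof.
have [phiM phiB phi_inj phi_onto] := iso; have [_ AM AV] := sA.
have phiV := hom_onV sA hom_on_iso.
move=> CA [k [r [rA rC]]]; exists k, (phi \o r); split => [i | _ /phi_onto [x [Ax <-]]].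
  exact/phiB/rA.
have phi_div i : phi x * (phi (r i))^-1 = phi (x * (r i)^-1).
  by rewrite phiM ?phiV //; apply: AV.
have [i [Cxr uniq_i]] := rC x Ax; exists i; split => [|j [x' [Cx' ex']]].
  by exists (x * (r i)^-1); rewrite /= phi_div.
apply: uniq_i; suff <- : x' = x * (r j)^-1 by [].
by apply: phi_inj; [apply: CA | apply: AM => //; apply: AV | rewrite ex' phi_div].
Qed.

Lemma is_subgroup_iso_core (M : H -> Prop) (N : K -> Prop) :
  is_subgroup M -> is_subgroup N -> is_subgroup (fun x => [/\ A x, M x & N (phi x)]).
Proof.
have [A1 AM AV] := sA; have phiM := hom_on_iso; have phiV := hom_onV sA phiM.
case=> M1 MM MV [N1 NM NV]; split; first by split; rewrite ?(hom_on1 sA phiM).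
  by move=> x y [Ax Mx Nx] [Ay My Ny]; split; [apply: AM | apply: MM | rewrite phiM //; apply: NM].
by move=> x [Ax Mx Nx]; split; [apply: AV | apply: MV | rewrite phiV //; apply: NV].
Qed.

Lemma has_pindex_iso_core (p : nat) (M : H -> Prop) (N : K -> Prop) :
  prime p ->
  is_normal_subgroup M -> has_pindex_in p (fun _ => True) M ->
  is_normal_subgroup N -> has_pindex_in p (fun _ => True) N ->
  has_pindex_in p A (fun x => [/\ A x, M x & N (phi x)]).
Proof.
move=> pp nM iM nN iN.
have [gM [thM [thMM pthM thM1]]] := normal_pindex_kernel pp nM iM.
have [gN [thN [thNM pthN thN1]]] := normal_pindex_kernel pp nN iN.
have thMA : hom_on A thM by move=> x y _ _; apply: thMM.
have thNA : hom_on A (thN \o phi) by move=> x y Ax Ay; rewrite /= hom_on_iso // thNM.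
apply: (has_pindex_preim sA (hom_on_pair thMA thNA) (Q := 1%G)).
  apply: (pgroup_himg_pair sA thMA thNA).
    apply: (pgroup_himg sA thMA (P := himg_group (@is_subgroupT H) thMM)) => // x _.
    exact: mem_himg.
  apply: (pgroup_himg sA thNA (P := himg_group (@is_subgroupT K) thNM)) => // x _.
  exact: mem_himg.
move=> x Ax; rewrite inE /=; split => [[_ /thM1 -> /thN1 ->] // | /eqP [/thM1 Mx /thN1 Nx]].
by split.
Qed.

End IsoCore.

Theorem proposition3p2 (p : nat) (H K : groupType)
    (A : H -> Prop) (B : K -> Prop) (phi : H -> K) :
  prime p ->
  conj_p_separable H p -> conj_p_separable K p ->
  is_central_subgroup A -> is_central_subgroup B ->
  is_iso_on A B phi ->
  p_separable_in p A -> p_separable_in p B ->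
  (forall C : H -> Prop, is_subgroup C -> (forall x, C x -> A x) ->
     has_pindex_in p A C -> p_separable_in p C) ->
  (forall D : K -> Prop, is_subgroup D -> (forall x, D x -> B x) ->
     has_pindex_in p B D -> p_separable_in p D) ->
  forall (M : H -> Prop) (N : K -> Prop),
    is_normal_subgroup M -> has_pindex_in p (fun _ => True) M ->
    is_normal_subgroup N -> has_pindex_in p (fun _ => True) N ->
    exists (R : H -> Prop) (S : K -> Prop),
      [/\ is_normal_subgroup R /\ has_pindex_in p (fun _ => True) R,
          is_normal_subgroup S /\ has_pindex_in p (fun _ => True) S,
          (forall x, R x -> M x), (forall y, S y -> N y)
        & (forall y, (B y /\ S y) <-> (exists x, [/\ A x, R x & phi x = y]))].
Proof.
move=> pp _ _ cA cB iso _ _ sepA sepB M N nM iM nN iN.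
have [sA _] := cA; have [_ phiB _ _] := iso.
pose C x := [/\ A x, M x & N (phi x)].
have sC : is_subgroup C := is_subgroup_iso_core sA iso nM.1 nN.1.
have CA x : C x -> A x by case.
have CM x : C x -> M x by case.
have iC : has_pindex_in p A C := has_pindex_iso_core sA iso pp nM iM nN iN.
have [R [nR RM RC]] := normal_pindex_trace pp cA nM iM sC CA CM iC (sepA _ sC CA iC).
pose D y := exists x, C x /\ phi x = y.
have sD : is_subgroup D := is_subgroup_image sA (hom_on_iso iso) sC CA.
have DB y : D y -> B y by case=> x [/CA Ax <-]; apply: phiB.
have DN y : D y -> N y by case=> x [[_ _ Nx] <-].
have iD : has_pindex_in p B D := has_pindex_iso_image sA iso CA iC.
have [S [nS SN SD]] := normal_pindex_trace pp cB nN iN sD DB DN iD (sepB _ sD DB iD).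
exists R, S; split => // y; rewrite SD; split => [[x [/RC [Ax Rx] <-]] | [x [Ax Rx <-]]].
  by exists x.
by exists x; split => //; apply/RC.
Qed.
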